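(* Let $n\ge 1$. For a canonical decorated permutation $(\pi,(a_1,\ldots,a_n))$ of $[n]$ with run decomposition $(B_0,B_1,B_2,\ldots)=(D^{(0)}_\pi,A^{(1)}_\pi,D^{(1)}_\pi,A^{(2)}_\pi,\ldots)$ (so $B_0=\{0\}$ and $B_k$ is the $k$-th block), define a tree $\tau$ on the vertex set $\{0,1,\ldots,n\}$, rooted at $0$, as follows: for $k\ge1$, each letter $\ell\in B_k$ with decoration $a_\ell=d$ is made a child of the $d$-th smallest element of $B_{k-1}$ if $k$ is odd, and of the $d$-th largest element of $B_{k-1}$ if $k$ is even, counting from $0$ (the smallest, resp. largest, element being the $0$-th). Then $\tau$ is an intransitive tree whose set of vertices at depth $k$ is $B_k$ for every $k$, and the map $(\pi,(a_i))\mapsto\tau$ is a bijection from the set of canonical decorated permutations of $[n]$ onto the set of intransitive trees on the vertex set $\{0,1,\ldots,n\}$.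
   Context: Permutations: for a permutation $\pi=\pi_1\cdots\pi_n$ of $[n]$, $\pi_i$ is an ascent top if $i=1$ or $\pi_{i-1}<\pi_i$, and a descent bottom if $\pi_{i-1}>\pi_i$. The run decomposition $\mathsf{RunDec}(\pi)=(D^{(0)}_\pi,A^{(1)}_\pi,D^{(1)}_\pi,A^{(2)}_\pi,\ldots)$ consists of $D^{(0)}_\pi=\{0\}$ followed by the letter sets of the maximal factors of $\pi$ consisting alternately of ascent tops ($A$-blocks) and descent bottoms ($D$-blocks); the first factor consists of ascent tops. A (stable) decorated permutation is a pair $(\pi,(a_1,\ldots,a_n))$ ($a_i$ attached to the letter $i$) with $0\le a_i<|\{j\in A^{(k)}_\pi: j>i,\ k\le\ell\}|$ if $i\in D^{(\ell)}_\pi$ and $0\le a_i<|\{j\in D^{(k)}_\pi: j<i,\ k<\ell\}|$ if $i\in A^{(\ell)}_\pi$. It is canonical if moreover $a_i<\mu_i(\pi)$ for all $i$, where $\mu_i(\pi)=|\{j\in A^{(\ell)}_\pi: j>i\}|$ if $i\in D^{(\ell)}_\pi$ and $\mu_i(\pi)=|\{j\in D^{(\ell-1)}_\pi: j<i\}|$ if $i\in A^{(\ell)}_\pi$. An intransitive tree (Postnikov) is a tree with distinct integer labels on its vertices such that every vertex's label is either smaller than the labels of all its neighbours or greater than the labels of all its neighbours. The depth of a vertex is its distance from the root $0$. *)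

From mathcomp Require Import all_boot.
Set Implicit Arguments. Unset Strict Implicit. Unset Printing Implicit Defensive.

(* Permutations of [n] are words s = pi_1 ... pi_n : seq nat with     *)
(* perm_eq s (iota 1 n).  Positions are 0-based: pi_{i+1} = nth 0 s i. *)

Definition asc_top (s : seq nat) (i : nat) : bool :=
  (i == 0) || (nth 0 s i.-1 < nth 0 s i).
Definition desc_bot (s : seq nat) (i : nat) : bool :=
  (0 < i) && (nth 0 s i < nth 0 s i.-1).

(* Index (>= 1) of the maximal factor of alternating type (ascent tops /
   descent bottoms) containing position i: one plus the number of type
   changes among positions 1..i.  Factor 1 is the first factor (ascent tops). *)
Definition blk (s : seq nat) (i : nat) : nat :=
  1 + count (fun j => asc_top s j != asc_top s j.-1) (iota 1 i).

Definition RunBlock (s : seq nat) (k : nat) : seq nat :=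
  if k == 0 then [:: 0]
  else [seq nth 0 s i | i <- iota 0 (size s) & blk s i == k].

Definition AscBlock (s : seq nat) (m : nat) : seq nat := RunBlock s (2 * m).-1.
Definition DescBlock (s : seq nat) (m : nat) : seq nat := RunBlock s (2 * m).

Definition level (s : seq nat) (x : nat) : nat := blk s (index x s).

Definition deco (n : nat) (a : n.-tuple nat) (x : nat) : nat := nth 0 a x.-1.

(* bound in the definition of a stable decorated permutation:
   x in D^{(l)} : |{ j in A^{(k)}, j > x, 1 <= k <= l }|
   x in A^{(l)} : |{ j in D^{(k)}, j < x, 0 <= k < l }| *)
Definition stable_bound (s : seq nat) (x : nat) : nat :=
  let k := level s x in
  if odd k then
    let l := k.+1./2 in
    count (fun j => j < x) (flatten [seq DescBlock s k' | k' <- iota 0 l])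
  else
    let l := k./2 in
    count (fun j => x < j) (flatten [seq AscBlock s k' | k' <- iota 1 l]).

Definition mu (s : seq nat) (x : nat) : nat :=
  let k := level s x in
  if odd k then
    let l := k.+1./2 in count (fun j => j < x) (DescBlock s l.-1)
  else
    let l := k./2 in count (fun j => x < j) (AscBlock s l).

Definition is_perm_of (n : nat) (s : seq nat) : bool := perm_eq s (iota 1 n).

Definition stable_decperm (n : nat) (s : seq nat) (a : n.-tuple nat) : bool :=
  is_perm_of n s && all (fun x => deco a x < stable_bound s x) s.

Definition canonical_decperm (n : nat) (s : seq nat) (a : n.-tuple nat) : bool :=
  stable_decperm s a && all (fun x => deco a x < mu s x) s.

(* Graphs on the vertex set {0, ..., n} = 'I_n.+1, given by their set  *)
(* of (ordered, symmetric) adjacent pairs.                             *)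
Definition graph (n : nat) := {set 'I_n.+1 * 'I_n.+1}.

Definition adj (n : nat) (G : graph n) : rel 'I_n.+1 := fun u v => (u, v) \in G.

Definition is_tree (n : nat) (G : graph n) : Prop :=
  [/\ forall u v, (u, v) \in G -> (v, u) \in G,
      forall u, (u, u) \notin G,
      forall u v, connect (adj G) u v &
      forall c : seq 'I_n.+1, uniq c -> 3 <= size c -> ~~ cycle (adj G) c].

Definition intransitive (n : nat) (G : graph n) : Prop :=
  forall v : 'I_n.+1,
    (forall w : 'I_n.+1, (v, w) \in G -> v < w) \/
    (forall w : 'I_n.+1, (v, w) \in G -> w < v).

Definition intransitive_tree (n : nat) (G : graph n) : Prop :=
  is_tree G /\ intransitive G.

Definition is_depth (n : nat) (G : graph n) (v : 'I_n.+1) (k : nat) : Prop :=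
  (exists p : seq 'I_n.+1, [/\ path (adj G) ord0 p, last ord0 p = v & size p = k]) /\
  (forall p : seq 'I_n.+1, path (adj G) ord0 p -> last ord0 p = v -> k <= size p).

Definition parent (n : nat) (s : seq nat) (a : n.-tuple nat) (x : nat) : nat :=
  let k := level s x in
  if odd k then nth 0 (sort leq (RunBlock s k.-1)) (deco a x)
  else nth 0 (sort geq (RunBlock s k.-1)) (deco a x).

Definition tau (n : nat) (s : seq nat) (a : n.-tuple nat) : graph n :=
  [set e : 'I_n.+1 * 'I_n.+1 |
     ((e.1 != 0 :> nat) && (parent s a e.1 == e.2)) ||
     ((e.2 != 0 :> nat) && (parent s a e.2 == e.1))].

From mathcomp Require Import all_boot zify.
Set Implicit Arguments. Unset Strict Implicit. Unset Printing Implicit Defensive.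

(* In [tau s a] each letter of the block B_k is joined to a letter of B_(k-1),
   below it when k is odd and above it when k is even: this is what the
   bound a_x < mu_x expresses.  Hence tau is a tree whose depth function is
   the block index, and a vertex is a local minimum or maximum according to
   the parity of its depth.
   Conversely, in an intransitive tree local minima and maxima alternate
   along edges and the root is a local minimum, so adjacent vertices have
   depths of different parity, hence differing by exactly one, and
   acyclicity makes the neighbour closer to the root unique.  Listing the
   vertices level by level, increasing on odd levels and decreasing on even
   ones, gives a permutation whose k-th run is exactly level k, because the
   parent of each letter occurs before it; the decorations are the ranks of
   the parents.  As every permutation lists its letters in this order with
   respect to its own blocks, the permutation is recovered from tau, and
   then so are the decorations. *)

Lemma blkS s i : blk s i.+1 = blk s i + (asc_top s i.+1 != asc_top s i).
Proof. by rewrite /blk -[i.+1]addn1 iotaD count_cat /= addn0 add0n add1n addn1 addSn. Qed.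

Lemma asc_top_odd_blk s i : asc_top s i = odd (blk s i).
Proof.
elim: i => [//|i IH]; rewrite blkS oddD -IH.
by case: (asc_top s i.+1); case: (asc_top s i).
Qed.

Lemma level_nth s i : uniq s -> i < size s -> level s (nth 0 s i) = blk s i.
Proof. by move=> s_uniq lt_i_s; rewrite /level index_uniq. Qed.

Lemma RunBlock_filter s k : uniq s -> k != 0 ->
  RunBlock s k = [seq x <- s | level s x == k].
Proof.
move=> s_uniq k_neq0; rewrite /RunBlock (negbTE k_neq0).
transitivity [seq x <- mkseq (nth 0 s) (size s) | level s x == k]; last by rewrite mkseq_nth.
rewrite /mkseq filter_map; congr map.
apply: eq_in_filter => i; rewrite mem_iota => /andP[_ lt_i_s] /=.
by rewrite level_nth.
Qed.

Lemma DescBlock_pred s k : odd k -> DescBlock s (k.+1./2).-1 = RunBlock s k.-1.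
Proof.
move=> k_odd; rewrite /DescBlock; congr RunBlock.
by move: (odd_double_half k) (odd_double_half k.+1); rewrite /= k_odd /=; lia.
Qed.

Lemma AscBlock_pred s k : ~~ odd k -> AscBlock s k./2 = RunBlock s k.-1.
Proof.
move=> k_even; rewrite /AscBlock; congr RunBlock.
by move: (odd_double_half k); rewrite (negbTE k_even); lia.
Qed.

Definition run_lt (f : nat -> nat) (x y : nat) : bool :=
  (f x < f y) || (f x == f y) && (if odd (f x) then x < y else y < x).

Definition run_le (f : nat -> nat) (x y : nat) : bool := (x == y) || run_lt f x y.

Lemma run_lt_trans f : transitive (run_lt f).
Proof.
move=> y x z; rewrite /run_lt.
move=> /orP[lt_xy|/andP[/eqP eq_xy dir_xy]] /orP[lt_yz|/andP[/eqP eq_yz dir_yz]].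
- by rewrite (ltn_trans lt_xy lt_yz).
- by rewrite -eq_yz lt_xy.
- by rewrite eq_xy lt_yz.
- move: dir_xy dir_yz; rewrite eq_xy eq_yz ltnn eqxx /=.
  by case: odd => ? ?; lia.
Qed.

Lemma run_lt_irr f : irreflexive (run_lt f).
Proof. by move=> x; rewrite /run_lt ltnn eqxx /=; case: odd; rewrite ltnn. Qed.

Lemma run_lt_level f x y : run_lt f x y -> f x <= f y.
Proof. by case/orP=> [/ltnW //|/andP[/eqP -> _]]. Qed.

Lemma run_le_total f : total (run_le f).
Proof.
move=> x y; rewrite /run_le /run_lt; case: (eqVneq x y) => //= x_neq_y.
case: (ltngtP (f x) (f y)) => //= ->.
by case: odd; case: (ltngtP x y) x_neq_y; rewrite ?eqxx ?orbT.
Qed.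

Lemma sorted_run_lt_level s f : uniq s -> {in s, f =1 level s} -> sorted (run_lt f) s.
Proof.
move=> s_uniq f_level; apply/(sortedP 0) => i lt_Si_s.
have lt_i_s : i < size s by apply: ltnW.
rewrite /run_lt !f_level ?mem_nth // !level_nth // blkS.
case: eqP => [same_type|]; last by rewrite addn1 ltnSn.
rewrite addn0 ltnn eqxx -asc_top_odd_blk -same_type /asc_top /=.
have : nth 0 s i != nth 0 s i.+1 by rewrite nth_uniq //; lia.
by rewrite neq_ltn => /orP[->|lt_Si_i] //; rewrite ltnNge ltnW.
Qed.

Lemma sorted_strict (T : eqType) (r : rel T) s :
  uniq s -> sorted (fun x y => (x == y) || r x y) s -> sorted r s.
Proof.
case: s => //= x s; elim: s x => //= y s IH x /andP[x_notin u_ys] /andP[le_xy path_ys].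
case/orP: le_xy => [/eqP eq_xy|->]; first by rewrite eq_xy mem_head in x_notin.
exact: IH.
Qed.

Section RunSortedWord.
Variables (s : seq nat) (f p : nat -> nat).
Hypothesis s_sorted : sorted (run_lt f) s.
Hypothesis f_gt0 : {in s, forall x, 0 < f x}.
Hypothesis parent_mem : {in s, forall y, 1 < f y -> p y \in s}.
Hypothesis f_parent : {in s, forall y, f (p y) = (f y).-1}.
Hypothesis parent_dir : {in s, forall y, if odd (f y) then p y < y else y < p y}.

Lemma run_lt_nth i j : j < i -> i < size s -> run_lt f (nth 0 s j) (nth 0 s i).
Proof.
move=> lt_ji lt_is.
by apply: (sorted_ltn_nth (@run_lt_trans f)) => //; rewrite inE; lia.
Qed.

Lemma f_nth_mono i j : j <= i -> i < size s -> f (nth 0 s j) <= f (nth 0 s i).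
Proof.
rewrite leq_eqVlt => /orP[/eqP -> //|lt_ji lt_is].
exact/run_lt_level/run_lt_nth.
Qed.

Lemma index_parent_lt i : i < size s -> 1 < f (nth 0 s i) ->
  index (p (nth 0 s i)) s < i.
Proof.
set y := nth 0 s i => lt_is gt1_y; have y_s : y \in s by apply: mem_nth.
have := index_mem (p y) s; rewrite parent_mem // => lt_js.
rewrite ltnNge; apply/negP => /f_nth_mono /(_ lt_js).
by rewrite -/y nth_index ?parent_mem // f_parent //; lia.
Qed.

Lemma f_head : 0 < size s -> f (nth 0 s 0) = 1.
Proof.
move=> s_gt0; have := f_gt0 (mem_nth 0 s_gt0).
by rewrite leq_eqVlt => /orP[/eqP <- // | /(index_parent_lt s_gt0)].
Qed.

Lemma f_nth_succ i : i.+1 < size s -> f (nth 0 s i) < f (nth 0 s i.+1) ->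
  f (nth 0 s i.+1) = (f (nth 0 s i)).+1 /\
  (nth 0 s i < nth 0 s i.+1) = ~~ odd (f (nth 0 s i)).
Proof.
set x := nth 0 s i; set y := nth 0 s i.+1 => lt_Si_s lt_xy.
have x_s : x \in s by apply/mem_nth/ltnW.
have y_s : y \in s by apply: mem_nth.
have gt1_y : 1 < f y by have := f_gt0 x_s; lia.
have := index_parent_lt lt_Si_s gt1_y; rewrite -/y ltnS => le_ji.
set j := index (p y) s in le_ji.
have nth_j : nth 0 s j = p y by rewrite nth_index ?parent_mem.
have le_px : f (p y) <= f x by rewrite -nth_j f_nth_mono //; lia.
have f_py : f (p y) = (f y).-1 := f_parent y_s.
have f_y : f y = (f x).+1 by lia.
have parent_side : if odd (f x) then p y <= x else x <= p y.
  move: le_ji; rewrite leq_eqVlt => /orP[/eqP eq_ji|lt_ji].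
    by rewrite -nth_j eq_ji -/x; case: odd.
  have := run_lt_nth lt_ji (ltnW lt_Si_s); rewrite nth_j -/x.
  by case/orP=> [|/andP[/eqP ->]]; [lia | case: odd => /ltnW].
split=> //; have := parent_dir y_s; rewrite f_y /=.
by case: odd parent_side => /= ? ?; lia.
Qed.

Lemma blk_run_sorted i : i < size s -> blk s i = f (nth 0 s i).
Proof.
elim: i => [|i IH] lt_i_s; first by rewrite f_head.
have lt_is : i < size s by apply: ltnW.
rewrite blkS (asc_top_odd_blk s i) IH // /asc_top /=.
case/orP: (run_lt_nth (ltnSn i) lt_i_s) => [lt_xy|/andP[/eqP <- dir]].
  by have [-> ->] := f_nth_succ lt_i_s lt_xy; case: odd; rewrite addn1.
by case: odd dir => [->|/ltnW le_yx]; rewrite ?ltnNge ?le_yx /= addn0.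
Qed.

End RunSortedWord.

Lemma sorted_nth_count (T : eqType) (x0 : T) (r : rel T) (Q : pred T) t i :
  transitive r -> sorted r t -> (forall y z, r y z -> Q z -> Q y) -> i < size t ->
  Q (nth x0 t i) = (i < count Q t).
Proof.
move=> r_tr; elim: t i => [//|y t IH] i /= t_path Q_down.
have below_y z : z \in t -> Q z -> Q y.
  by move=> z_t; apply: Q_down; move/allP: (order_path_min r_tr t_path); apply.
case Qy: (Q y).
  case: i => [|i] /=; rewrite ?Qy // ltnS => lt_i_t.
  by rewrite add1n ltnS IH // (path_sorted t_path).
have count0 : count Q t = 0.
  apply/eqP; rewrite -leqn0 leqNgt -has_count; apply/hasP => -[z z_t Qz].
  by rewrite (below_y z z_t Qz) in Qy.
rewrite count0; case: i => [|i] /=; rewrite ?Qy // ltnS => lt_i_t.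
apply/negbTE/negP => /(below_y _ (mem_nth x0 lt_i_t)).
by rewrite Qy.
Qed.

Definition parent_candidates (s : seq nat) (x : nat) : seq nat :=
  sort (if odd (level s x) then leq else geq) (RunBlock s (level s x).-1).

Definition parent_side (s : seq nat) (x y : nat) : bool :=
  if odd (level s x) then y < x else x < y.

Lemma parentE n s (a : n.-tuple nat) x :
  parent s a x = nth 0 (parent_candidates s x) (deco a x).
Proof. by rewrite /parent /parent_candidates; case: odd. Qed.

Lemma muE s x : mu s x = count (parent_side s x) (parent_candidates s x).
Proof.
rewrite /mu /parent_candidates /parent_side count_sort; cbv zeta.
by case: ifP => k_odd; rewrite ?DescBlock_pred ?AscBlock_pred ?k_odd.
Qed.

(* The candidates are sorted so that those on the parent side of x come
   first; hence a_x < mu_x says exactly that the chosen parent lies on that side. *)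
Lemma parent_side_nth s x i : i < size (parent_candidates s x) ->
  parent_side s x (nth 0 (parent_candidates s x) i) = (i < mu s x).
Proof.
rewrite muE /parent_candidates /parent_side; case: odd => lt_i.
  apply: (@sorted_nth_count _ 0 leq) lt_i.
  - exact: leq_trans.
  - exact: (sort_sorted leq_total).
  - by move=> y z /=; apply: leq_ltn_trans.
apply: (@sorted_nth_count _ 0 geq) lt_i.
- by move=> y x' z /= le_xy le_zy; apply: leq_trans le_zy le_xy.
- by apply: sort_sorted => u v; apply: leq_total.
- by move=> y z /= le_zy lt_xz; apply: leq_trans lt_xz le_zy.
Qed.

Lemma count_flatten_iota_last (f : nat -> seq nat) (P : pred nat) m l :
  count P (f (m + l)) <= count P (flatten [seq f k | k <- iota m l.+1]).
Proof. by rewrite -addn1 iotaD map_cat flatten_cat count_cat /= cats0 leq_addl. Qed.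

Lemma mu_le_stable_bound s x : mu s x <= stable_bound s x.
Proof.
rewrite /mu /stable_bound; cbv zeta; have : 0 < level s x by [].
move: (level s x) => k k_gt0; case: ifP => k_odd.
  have l_gt0 : 0 < k.+1./2 by case: k k_gt0 {k_odd}.
  rewrite /DescBlock -(prednK l_gt0).
  exact: (count_flatten_iota_last (fun k => RunBlock s (2 * k)) _ 0).
have l_gt0 : 0 < k./2 by move: (odd_double_half k); rewrite k_odd; lia.
have := count_flatten_iota_last (fun k => AscBlock s k) (fun j => x < j) 1 k./2.-1.
by rewrite add1n prednK.
Qed.

Section LeveledTree.
Variables (n : nat) (G : graph n) (h : 'I_n.+1 -> nat) (p : 'I_n.+1 -> 'I_n.+1).
Hypothesis G_edgeP : forall u v,
  (u, v) \in G <-> (u != ord0 /\ p u = v) \/ (v != ord0 /\ p v = u).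
Hypothesis h_root : h ord0 = 0.
Hypothesis h_gt0 : forall v, v != ord0 -> 0 < h v.
Hypothesis h_parent : forall v, v != ord0 -> h (p v) = (h v).-1.

Lemma h_parentS v : v != ord0 -> h v = (h (p v)).+1.
Proof. by move=> v_neq0; rewrite h_parent // prednK // h_gt0. Qed.

Lemma h_eq0 v : h v = 0 -> v = ord0.
Proof. by move=> hv0; apply/eqP; apply: contraT => /h_gt0; rewrite hv0. Qed.

Lemma adj_parent v : v != ord0 -> adj G (p v) v.
Proof. by move=> v_neq0; apply/G_edgeP; right. Qed.

Lemma adj_sym : symmetric (adj G).
Proof. by move=> u v; apply/idP/idP => /G_edgeP uv; apply/G_edgeP; tauto. Qed.

Lemma adjE u v : adj G u v ->
  (u != ord0 /\ p u = v /\ h u = (h v).+1) \/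
  (v != ord0 /\ p v = u /\ h v = (h u).+1).
Proof. by case/G_edgeP => -[? <-]; [left|right]; rewrite -h_parentS. Qed.

Lemma adj_h_le u v : adj G u v -> h u <= h v -> u = p v.
Proof. by case/adjE => -[_ [<- ->]] //; rewrite ltnn. Qed.

Lemma path_from_root v :
  exists q, [/\ path (adj G) ord0 q, last ord0 q = v & size q = h v].
Proof.
move: {2}(h v) (erefl (h v)) => k; elim: k v => [v /h_eq0 ->|k IH v hv].
  by exists [::]; rewrite h_root.
have v_neq0 : v != ord0 by apply: contraPneq hv => ->; rewrite h_root.
have [q [q_path q_last q_size]] := IH (p v) (etrans (h_parent v_neq0) (congr1 predn hv)).
exists (rcons q v); rewrite rcons_path last_rcons size_rcons q_path q_last.
by rewrite adj_parent // q_size -h_parentS.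
Qed.

Lemma walk_h_bound x q : path (adj G) x q -> h (last x q) <= h x + size q.
Proof.
elim: q x => [|y q IH] x /=; first by rewrite addn0.
case/andP => /adjE xy /IH; case: xy => -[_ [_ ->]]; lia.
Qed.

Lemma leveled_connect u v : connect (adj G) u v.
Proof.
have root_connect w : connect (adj G) ord0 w.
  by have [q [q_path q_last _]] := path_from_root w; apply/connectP; exists q.
by apply: connect_trans (root_connect v); rewrite (sym_connect_sym adj_sym).
Qed.

(* Both cycle-neighbours of a vertex of maximal height must be its parent. *)
Lemma leveled_acyclic c : uniq c -> 3 <= size c -> ~~ cycle (adj G) c.
Proof.
move=> c_uniq c_size.
have c0 : head ord0 c \in c by case: c c_size {c_uniq} => //= x c _; apply: mem_head.
case: (@arg_maxnP _ (head ord0 c) (mem c) h c0) => v v_c v_max.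
rewrite -(rot_cycle (index v c)) -(rot_uniq (index v c)) in c_uniq *.
rewrite -(size_rot (index v c)) in c_size.
have {}v_max x : x \in rot (index v c) c -> h x <= h v by rewrite mem_rot; apply: v_max.
move: c_uniq c_size v_max; rewrite rot_index //.
case: (drop _ _ ++ _) => [//|y c']; case/lastP: c' => [//|c' z] c_uniq _ v_max.
apply/negP; rewrite /= rcons_path last_rcons => /and3P[vy _ zv].
have v_nbr x : x \in y :: rcons c' z -> adj G x v -> x = p v.
  by move=> x_c xv; apply: adj_h_le xv (v_max x _); rewrite inE x_c orbT.
move: c_uniq; rewrite /= mem_rcons !inE (v_nbr y) ?mem_head ?(adj_sym y) //.
by rewrite (v_nbr z) ?mem_head ?inE ?mem_rcons ?mem_head ?orbT // eqxx andbF.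
Qed.

Lemma leveled_is_tree : is_tree G.
Proof.
split.
- by move=> u v; rewrite -[(v, u) \in G]/(adj G v u) adj_sym.
- by move=> u; apply/negP => /adjE [] [_ [_]]; lia.
- exact: leveled_connect.
- exact: leveled_acyclic.
Qed.

Hypothesis parent_dir : forall v, v != ord0 -> if odd (h v) then p v < v else v < p v.

Lemma leveled_intransitive : intransitive G.
Proof.
move=> v; case v_odd: (odd (h v)); [right|left] => w.
all: case/adjE=> [[v_neq0 [pv _]]|[w_neq0 [pw hw]]].
all: by [move: (parent_dir v_neq0); rewrite v_odd pv
       | move: (parent_dir w_neq0); rewrite hw /= v_odd pw].
Qed.

Lemma leveled_depthE v k : is_depth G v k <-> h v = k.
Proof.
have [q [q_path q_last q_size]] := path_from_root v.
split=> [[[q' [q'_path q'_last q'_size]] k_min]|<-].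
  have := walk_h_bound q'_path; have := k_min q q_path q_last.
  by rewrite q'_last q'_size q_size h_root; lia.
split; first by exists q.
by move=> q' q'_path q'_last; have := walk_h_bound q'_path; rewrite q'_last h_root.
Qed.

End LeveledTree.

Definition height (s : seq nat) (v : nat) : nat := if v == 0 then 0 else level s v.

Lemma heightE s v : v != 0 -> height s v = level s v.
Proof. by rewrite /height => /negbTE ->. Qed.

Lemma height_gt0 s v : v != 0 -> 0 < height s v.
Proof. by move/heightE ->. Qed.

Section PermutationWord.
Variables (n : nat) (s : seq nat).
Hypothesis s_perm : is_perm_of n s.

Lemma perm_word_uniq : uniq s.
Proof. by rewrite (perm_uniq s_perm) iota_uniq. Qed.

Lemma mem_perm_word x : (x \in s) = (0 < x <= n).
Proof. by rewrite (perm_mem s_perm) mem_iota add1n ltnS. Qed.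

Lemma ord_mem_perm_word (v : 'I_n.+1) : v != ord0 -> (v : nat) \in s.
Proof. by move=> v_neq0; rewrite mem_perm_word lt0n v_neq0 -ltnS ltn_ord. Qed.

Lemma mem_RunBlock v k : (v \in RunBlock s k) =
  if k == 0 then v == 0 else (v \in s) && (level s v == k).
Proof.
case: (eqVneq k 0) => [->|k_neq0]; first by rewrite inE.
by rewrite RunBlock_filter ?perm_word_uniq // mem_filter andbC.
Qed.

Lemma RunBlock_uniq k : uniq (RunBlock s k).
Proof.
case: (eqVneq k 0) => [->//|k_neq0].
by rewrite RunBlock_filter ?filter_uniq ?perm_word_uniq.
Qed.

Lemma mem_RunBlock_height v k : v <= n -> (v \in RunBlock s k) = (height s v == k).
Proof.
move=> le_vn; rewrite mem_RunBlock /height mem_perm_word le_vn andbT lt0n.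
case: (eqVneq v 0) => [->|v_neq0]; first by case: k.
by case: (eqVneq k 0) => [->|//]; rewrite eqn0Ngt.
Qed.

End PermutationWord.

Lemma canonical_decperm_perm n s (a : n.-tuple nat) :
  canonical_decperm s a -> is_perm_of n s.
Proof. by case/andP => /andP[]. Qed.

Section CanonicalTree.
Variables (n : nat) (s : seq nat) (a : n.-tuple nat).
Hypothesis can : canonical_decperm s a.

Let s_perm : is_perm_of n s := canonical_decperm_perm can.

Lemma deco_lt_mu x : x \in s -> deco a x < mu s x.
Proof. by case/andP: can => _ /allP; apply. Qed.

Lemma deco_lt_size x : x \in s -> deco a x < size (parent_candidates s x).
Proof. by move/deco_lt_mu/leq_trans; apply; rewrite muE count_size. Qed.

Lemma parent_in_block x : x \in s ->
  parent s a x \in RunBlock s (level s x).-1 /\ parent_side s x (parent s a x).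
Proof.
move=> x_s; have lt_size := deco_lt_size x_s.
rewrite parentE parent_side_nth ?deco_lt_mu //; split=> //.
by rewrite -(mem_sort (if odd (level s x) then leq else geq)) mem_nth.
Qed.

Lemma parent_le x : x \in s -> parent s a x <= n.
Proof.
case/parent_in_block => + _; rewrite (mem_RunBlock s_perm).
case: eqP => [_ /eqP -> // | _ /andP[]].
by rewrite (mem_perm_word s_perm) => /andP[].
Qed.

Lemma height_parent x : x \in s -> height s (parent s a x) = (level s x).-1.
Proof.
move=> x_s; apply/eqP; rewrite -(mem_RunBlock_height s_perm) ?parent_le //.
by case: (parent_in_block x_s).
Qed.

Definition tau_parent (v : 'I_n.+1) : 'I_n.+1 := inord (parent s a v).

Lemma tau_parentE v : v != ord0 -> tau_parent v = parent s a v :> nat.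
Proof. by move=> v_neq0; rewrite inordK // ltnS parent_le ?ord_mem_perm_word. Qed.

Lemma tau_edgeP u v : (u, v) \in tau s a <->
  (u != ord0 /\ tau_parent u = v) \/ (v != ord0 /\ tau_parent v = u).
Proof.
have edge_eq (x y : 'I_n.+1) :
    ((x != 0 :> nat) && (parent s a x == y)) = (x != ord0) && (tau_parent x == y).
  rewrite -[(x != 0 :> nat)]/(x != ord0).
  by case: (eqVneq x ord0) => [->//|x_neq0]; rewrite -val_eqE /= tau_parentE.
rewrite inE /= !edge_eq.
split; first by case/orP=> /andP[? /eqP]; [left|right].
by case=> -[-> <-]; rewrite eqxx ?orbT.
Qed.

Lemma tau_height_parent v : v != ord0 -> height s (tau_parent v) = (height s v).-1.
Proof.
move=> v_neq0; rewrite tau_parentE // height_parent ?ord_mem_perm_word //.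
by rewrite (@heightE s v).
Qed.

Lemma tau_parent_dir v : v != ord0 ->
  if odd (height s v) then tau_parent v < v else v < tau_parent v.
Proof.
move=> v_neq0; rewrite tau_parentE // (@heightE s v) //.
by case: (parent_in_block (ord_mem_perm_word s_perm v_neq0)).
Qed.

Lemma tau_height_gt0 (v : 'I_n.+1) : v != ord0 -> 0 < height s v.
Proof. exact: height_gt0. Qed.

Lemma tau_intransitive_tree : intransitive_tree (tau s a).
Proof.
split; first exact: (leveled_is_tree tau_edgeP _ tau_height_gt0 tau_height_parent).
exact: (leveled_intransitive tau_edgeP tau_height_gt0 tau_height_parent tau_parent_dir).
Qed.

Lemma tau_depthE v k : is_depth (tau s a) v k <-> (v : nat) \in RunBlock s k.
Proof.
rewrite (leveled_depthE tau_edgeP _ tau_height_gt0 tau_height_parent) //.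
rewrite (mem_RunBlock_height s_perm); last by rewrite -ltnS.
by split=> [->|/eqP].
Qed.

Lemma tau_parent_unique u v :
  adj (tau s a) u v -> height s u <= height s v -> u = tau_parent v.
Proof. exact: (adj_h_le tau_edgeP tau_height_gt0 tau_height_parent). Qed.

End CanonicalTree.

Lemma tau_inj_word n s1 s2 (a1 a2 : n.-tuple nat) :
  canonical_decperm s1 a1 -> canonical_decperm s2 a2 -> tau s1 a1 = tau s2 a2 -> s1 = s2.
Proof.
move=> can1 can2 tau_eq.
have perm1 := canonical_decperm_perm can1; have perm2 := canonical_decperm_perm can2.
have level_eq : {in s2, level s1 =1 level s2}.
  move=> x x_s2; have := x_s2; rewrite (mem_perm_word perm2) => /andP[_ le_xn].
  have x_val : (inord x : 'I_n.+1) = x :> nat by rewrite inordK.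
  have : x \in RunBlock s1 (level s2 x).
    rewrite -x_val -(tau_depthE can1) tau_eq (tau_depthE can2) x_val.
    by rewrite (mem_RunBlock perm2) x_s2 eqxx.
  by rewrite (mem_RunBlock perm1) => /andP[_ /eqP].
apply: (irr_sorted_eq (@run_lt_trans (level s1)) (@run_lt_irr _)).
- exact: sorted_run_lt_level (perm_word_uniq perm1) (fun _ _ => erefl).
- exact: sorted_run_lt_level (perm_word_uniq perm2) level_eq.
- by move=> x; rewrite (mem_perm_word perm1) (mem_perm_word perm2).
Qed.

Lemma tau_inj_deco n s (a1 a2 : n.-tuple nat) :
  canonical_decperm s a1 -> canonical_decperm s a2 -> tau s a1 = tau s a2 -> a1 = a2.
Proof.
move=> can1 can2 tau_eq; have s_perm := canonical_decperm_perm can1.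
have parent_eq x : x \in s -> parent s a1 x = parent s a2 x.
  move=> x_s; have := x_s; rewrite (mem_perm_word s_perm) => /andP[x_gt0 le_xn].
  set u : 'I_n.+1 := inord x.
  have u_val : u = x :> nat by rewrite inordK.
  have u_neq0 : u != ord0 by rewrite -val_eqE /= u_val -lt0n.
  have : tau_parent s a1 u = tau_parent s a2 u.
    apply: (tau_parent_unique can2).
      by rewrite -tau_eq; apply: (adj_parent (tau_edgeP can1)).
    by rewrite (tau_height_parent can1) // leq_pred.
  by move/(congr1 (@nat_of_ord n.+1)); rewrite !tau_parentE // u_val.
have deco_eq x : x \in s -> deco a1 x = deco a2 x.
  move=> x_s; move/eqP: (parent_eq x x_s); rewrite !parentE.
  have cand_uniq : uniq (parent_candidates s x) by rewrite sort_uniq (RunBlock_uniq s_perm).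
  by rewrite nth_uniq ?(deco_lt_size can1) ?(deco_lt_size can2) // => /eqP.
apply: val_inj; apply: (@eq_from_nth _ 0); rewrite ?size_tuple // => i lt_in.
by have := deco_eq i.+1; rewrite /deco /= (mem_perm_word s_perm) => ->.
Qed.

Section IntransitiveTree.
Variables (n : nat) (G : graph n).
Hypothesis G_itree : intransitive_tree G.

Let G_sym u v : adj G u v -> adj G v u.
Proof. by case: G_itree => -[+ _ _ _] _; apply. Qed.

Let G_irr u : ~~ adj G u u.
Proof. by case: G_itree => -[_ + _ _] _; apply. Qed.

Let G_connect u v : connect (adj G) u v.
Proof. by case: G_itree => -[_ _ + _] _; apply. Qed.

Let G_acyclic c : uniq c -> 3 <= size c -> ~~ cycle (adj G) c.
Proof. by case: G_itree => -[_ _ _ +] _; apply. Qed.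

Fixpoint walk_from_root (m : nat) (v : 'I_n.+1) : bool :=
  if m is m'.+1 then [exists u, walk_from_root m' u && adj G u v] else v == ord0.

Lemma walk_from_root_cat q x m : path (adj G) x q ->
  walk_from_root m x -> walk_from_root (m + size q) (last x q).
Proof.
elim: q x m => [|y q IH] x m /=; first by rewrite addn0.
case/andP => xy q_path walk_x; rewrite addnS -addSn; apply: IH => //=.
by apply/existsP; exists x; rewrite walk_x.
Qed.

Lemma walk_from_root_exists v : exists m, walk_from_root m v.
Proof.
case/connectP: (G_connect ord0 v) => q q_path ->.
by exists (0 + size q); apply: walk_from_root_cat.
Qed.

Definition depth (v : 'I_n.+1) : nat := ex_minn (walk_from_root_exists v).

Lemma depth_walk v : walk_from_root (depth v) v.
Proof. by rewrite /depth; case: ex_minnP. Qed.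

Lemma depth_min v m : walk_from_root m v -> depth v <= m.
Proof. by rewrite /depth; case: ex_minnP => k _ k_min /k_min. Qed.

Lemma depth_root : depth ord0 = 0.
Proof. by apply/eqP; rewrite -leqn0; apply: depth_min. Qed.

Lemma depth_eq0 v : depth v = 0 -> v = ord0.
Proof. by move=> dv0; have := depth_walk v; rewrite dv0 => /eqP. Qed.

Lemma depth_gt0 v : v != ord0 -> 0 < depth v.
Proof. by move=> v_neq0; rewrite lt0n; apply: contra v_neq0 => /eqP /depth_eq0 ->. Qed.

Lemma depth_adj_le u v : adj G u v -> depth v <= (depth u).+1.
Proof. by move=> uv; apply: depth_min => /=; apply/existsP; exists u; rewrite depth_walk. Qed.

Lemma depth_pred v m : depth v = m.+1 -> exists u, adj G u v /\ depth u = m.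
Proof.
move=> dv; have := depth_walk v; rewrite dv /= => /existsP[u /andP[walk_u uv]].
exists u; split=> //; apply/eqP; rewrite eqn_leq depth_min //=.
by have := depth_adj_le uv; rewrite dv ltnS.
Qed.

Definition local_min (v : 'I_n.+1) : bool := [forall w, adj G v w ==> (v < w)].

Lemma local_minP v : reflect (forall w, adj G v w -> v < w) (local_min v).
Proof.
apply: (iffP forallP) => vmin w; last exact/implyP/vmin.
by move=> vw; move: (vmin w); rewrite vw.
Qed.

Lemma local_maxP v : ~~ local_min v -> forall w, adj G v w -> w < v.
Proof. by case: G_itree => _ /(_ v) [/local_minP ->|]. Qed.

Lemma local_min_adj u v : adj G u v -> local_min v = ~~ local_min u.
Proof.
move=> uv; have vu := G_sym uv.
case: (boolP (local_min u)) => [/local_minP/(_ v uv) lt_uv|/local_maxP/(_ v uv) lt_vu] /=.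
  by apply/negbTE/negP => /local_minP/(_ u vu); lia.
by apply: contraT => /local_maxP/(_ u vu); lia.
Qed.

Lemma local_min_root : local_min ord0.
Proof.
apply/local_minP => w; rewrite lt0n; apply: contraTneq => w_eq0.
have -> : w = ord0 by apply: val_inj.
exact: G_irr.
Qed.

Lemma local_min_walk m v : walk_from_root m v -> local_min v = ~~ odd m.
Proof.
elim: m v => [v /eqP -> | m IH v /existsP[u /andP[walk_u uv]]].
  exact: local_min_root.
by rewrite (local_min_adj uv) (IH u walk_u) negbK.
Qed.

Lemma local_min_depth v : local_min v = ~~ odd (depth v).
Proof. exact/local_min_walk/depth_walk. Qed.

Lemma depth_adj u v : adj G u v -> depth v = (depth u).+1 \/ depth u = (depth v).+1.
Proof.
move=> uv; have := depth_adj_le uv; have := depth_adj_le (G_sym uv).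
have : depth u != depth v.
  by apply/eqP => eq_d; have := local_min_adj uv; rewrite !local_min_depth eq_d; case: odd.
lia.
Qed.

Lemma same_depth_path m x y : x != y -> depth x = m -> depth y = m ->
  exists q, [/\ path (adj G) x q, last x q = y, uniq (x :: q) &
             {in q, forall z, depth z <= m}].
Proof.
elim: m x y => [|m IH] x y x_neq_y dx dy.
  by move: x_neq_y; rewrite (depth_eq0 dx) (depth_eq0 dy) eqxx.
have [px [px_x dpx]] := depth_pred dx; have [py [py_y dpy]] := depth_pred dy.
have x_notin z : depth z <= m -> (x == z) = false.
  by move=> dz; apply: contraTF dz => /eqP <-; rewrite dx ltnn.
have y_notin z : depth z <= m -> (y == z) = false.
  by move=> dz; apply: contraTF dz => /eqP <-; rewrite dy ltnn.
case: (eqVneq px py) => [eq_p|px_neq_py].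
  exists [:: px; y]; split=> //=; first by rewrite G_sym //= eq_p py_y.
    by rewrite !inE x_notin ?dpx // (negbTE x_neq_y) eq_sym y_notin ?dpx.
  by move=> z; rewrite !inE => /orP[] /eqP ->; rewrite ?dpx ?dy.
have [q [q_path q_last q_uniq q_depth]] := IH px py px_neq_py dpx dpy.
exists (px :: rcons q y); split=> /=.
- by rewrite G_sym //= rcons_path q_path q_last.
- by rewrite last_rcons.
- move: q_uniq => /= /andP[px_notin_q q_uniq].
  have x_notin_q : x \notin q by apply/negP => /q_depth; rewrite dx ltnn.
  have y_notin_q : y \notin q by apply/negP => /q_depth; rewrite dy ltnn.
  rewrite !inE !mem_rcons !inE rcons_uniq q_uniq (negbTE x_notin_q) (negbTE y_notin_q).
  by rewrite (negbTE px_notin_q) x_notin ?dpx // (negbTE x_neq_y) (eq_sym px y) y_notin ?dpx.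
- move=> z; rewrite inE mem_rcons inE.
  by case/or3P=> [/eqP ->|/eqP ->|/q_depth /leqW //]; rewrite ?dpx ?dy.
Qed.

Lemma depth_adj_lt u v : adj G u v -> depth u < depth v -> depth v = (depth u).+1.
Proof. by move=> uv; case: (depth_adj uv) => ->; lia. Qed.

(* Two lower neighbours of v, joined by a path through lower levels, would
   close a cycle through v. *)
Lemma lower_nbr_unique v u1 u2 : adj G u1 v -> adj G u2 v ->
  depth u1 < depth v -> depth u2 < depth v -> u1 = u2.
Proof.
move=> u1v u2v /(depth_adj_lt u1v) dv1 /(depth_adj_lt u2v) dv2.
apply/eqP; apply: contraT => u1_neq_u2.
have d12 : depth u2 = depth u1 by apply: succn_inj; rewrite -dv1 -dv2.
have [q [q_path q_last q_uniq q_depth]] := same_depth_path u1_neq_u2 erefl d12.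
have v_notin : v \notin u1 :: q.
  rewrite inE negb_or; apply/andP; split.
    by apply/eqP => eq_v; move: dv1; rewrite eq_v; lia.
  by apply/negP => /q_depth; rewrite dv1 ltnn.
have := G_acyclic (c := v :: u1 :: q); rewrite cons_uniq v_notin q_uniq => /(_ isT).
case: q q_path q_last {q_uniq q_depth v_notin} => [/= _ eq_u|z q q_path q_last].
  by rewrite eq_u eqxx in u1_neq_u2.
move=> /(_ isT) /negP no_cycle; exfalso; apply: no_cycle; rewrite /= G_sym //=.
move: q_path q_last => /= /andP[-> z_path] z_last.
by rewrite rcons_path z_path z_last.
Qed.

Definition tree_parent (v : 'I_n.+1) : 'I_n.+1 :=
  odflt ord0 [pick u | adj G u v && (depth u < depth v)].

Lemma tree_parent_spec v : v != ord0 ->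
  adj G (tree_parent v) v /\ depth (tree_parent v) < depth v.
Proof.
move=> v_neq0; rewrite /tree_parent; case: pickP => [u /andP[] //|no_parent].
have [u [uv du]] := depth_pred (esym (prednK (depth_gt0 v_neq0))).
by move: (no_parent u); rewrite uv du ltn_predL depth_gt0.
Qed.

Lemma depth_tree_parent v : v != ord0 -> depth (tree_parent v) = (depth v).-1.
Proof. by case/tree_parent_spec => /depth_adj_lt /[apply] ->. Qed.

Lemma tree_edgeP u v : (u, v) \in G <->
  (u != ord0 /\ tree_parent u = v) \/ (v != ord0 /\ tree_parent v = u).
Proof.
split=> [uv|[][w_neq0 <-]]; last first.
- exact: (tree_parent_spec w_neq0).1.
- exact: G_sym (tree_parent_spec w_neq0).1.
have nonroot w w' : depth w = (depth w').+1 -> w != ord0.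
  by move=> dw; apply/eqP => w0; move: dw; rewrite w0 depth_root.
case: (depth_adj uv) => duv; [right|left]; split; try exact: nonroot duv.
- have [pv_v lt_pv] := tree_parent_spec (nonroot _ _ duv).
  by apply: lower_nbr_unique pv_v uv lt_pv _; rewrite duv.
- have [pu_u lt_pu] := tree_parent_spec (nonroot _ _ duv).
  by apply: lower_nbr_unique pu_u (G_sym uv) lt_pu _; rewrite duv.
Qed.

Lemma tree_parent_dir v : v != ord0 ->
  if odd (depth v) then tree_parent v < v else v < tree_parent v.
Proof.
move=> v_neq0; have vp := G_sym (tree_parent_spec v_neq0).1.
have := local_min_depth v.
by case: (boolP (local_min v)) => [/local_minP/(_ _ vp)|/local_maxP/(_ _ vp)]; case: odd.
Qed.

End IntransitiveTree.

Section TreeWord.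
Variables (n : nat) (G : graph n).
Hypothesis G_itree : intransitive_tree G.

Definition tree_level (x : nat) : nat := depth G_itree (inord x).

Definition tree_parent_nat (x : nat) : nat := tree_parent G_itree (inord x).

Definition tree_word : seq nat := sort (run_le tree_level) (iota 1 n).

Definition tree_deco : n.-tuple nat :=
  [tuple of [seq index (tree_parent_nat x) (parent_candidates tree_word x) | x <- iota 1 n]].

Lemma tree_word_perm : is_perm_of n tree_word.
Proof. by rewrite /is_perm_of perm_sort. Qed.

Lemma tree_word_sorted : sorted (run_lt tree_level) tree_word.
Proof.
apply: sorted_strict; first exact: perm_word_uniq tree_word_perm.
exact: (sort_sorted (@run_le_total _)).
Qed.

Lemma inord_word x : x \in tree_word -> (inord x : 'I_n.+1) = x :> nat.
Proof. by rewrite (mem_perm_word tree_word_perm) => /andP[_ ?]; rewrite inordK. Qed.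

Lemma inord_word_neq0 x : x \in tree_word -> (inord x : 'I_n.+1) != ord0.
Proof.
move=> x_word; rewrite -val_eqE /= inord_word //.
by move: x_word; rewrite (mem_perm_word tree_word_perm) lt0n => /andP[].
Qed.

Lemma tree_level_gt0 : {in tree_word, forall x, 0 < tree_level x}.
Proof. by move=> x /inord_word_neq0; apply: depth_gt0. Qed.

Lemma tree_level_parent :
  {in tree_word, forall x, tree_level (tree_parent_nat x) = (tree_level x).-1}.
Proof.
by move=> x /inord_word_neq0 x_neq0; rewrite /tree_level inord_val depth_tree_parent.
Qed.

Lemma tree_level0 : tree_level 0 = 0.
Proof. by rewrite /tree_level (inord_val ord0) depth_root. Qed.

Lemma tree_parent_mem :
  {in tree_word, forall x, 1 < tree_level x -> tree_parent_nat x \in tree_word}.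
Proof.
move=> x x_word gt1_x; have le_pn : tree_parent_nat x <= n by rewrite -ltnS ltn_ord.
rewrite (mem_perm_word tree_word_perm) le_pn andbT lt0n.
apply: contraTneq gt1_x => px0; move: (tree_level_parent x_word).
by rewrite px0 tree_level0; lia.
Qed.

Lemma tree_parent_nat_dir : {in tree_word, forall x,
  if odd (tree_level x) then tree_parent_nat x < x else x < tree_parent_nat x}.
Proof.
move=> x x_word; have := tree_parent_dir G_itree (inord_word_neq0 x_word).
by rewrite inord_word.
Qed.

Lemma level_tree_word x : x \in tree_word -> level tree_word x = tree_level x.
Proof.
move=> x_word; have lt_x := index_mem x tree_word; rewrite x_word in lt_x.
have := blk_run_sorted tree_word_sorted tree_level_gt0 tree_parent_mem
  tree_level_parent tree_parent_nat_dir lt_x.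
by rewrite nth_index.
Qed.

Lemma deco_tree_deco x : x \in tree_word ->
  deco tree_deco x = index (tree_parent_nat x) (parent_candidates tree_word x).
Proof.
rewrite (mem_perm_word tree_word_perm) => /andP[x_gt0 le_xn].
by rewrite /deco (nth_map 0) ?nth_iota ?size_iota; rewrite ?add1n ?prednK //; lia.
Qed.

Lemma tree_parent_candidate x : x \in tree_word ->
  tree_parent_nat x \in parent_candidates tree_word x.
Proof.
move=> x_word; have level_p := tree_level_parent x_word.
rewrite mem_sort (mem_RunBlock tree_word_perm) level_tree_word //.
case: eqP => [pred_lx0|pred_lx_neq0].
  by move: level_p; rewrite pred_lx0 /tree_level /tree_parent_nat inord_val => /depth_eq0 ->.
have p_word : tree_parent_nat x \in tree_word.
  by apply: (tree_parent_mem x_word); have := tree_level_gt0 x_word; lia.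
by rewrite p_word level_tree_word // level_p eqxx.
Qed.

Lemma parent_tree_deco x : x \in tree_word ->
  parent tree_word tree_deco x = tree_parent_nat x.
Proof.
by move=> x_word; rewrite parentE deco_tree_deco // nth_index ?tree_parent_candidate.
Qed.

Lemma tree_deco_canonical : canonical_decperm tree_word tree_deco.
Proof.
have deco_lt_mu x : x \in tree_word -> deco tree_deco x < mu tree_word x.
  move=> x_word; have cand := tree_parent_candidate x_word.
  rewrite deco_tree_deco // -parent_side_nth ?index_mem // nth_index //.
  rewrite /parent_side level_tree_word //.
  exact: tree_parent_nat_dir.
rewrite /canonical_decperm /stable_decperm tree_word_perm /=.
apply/andP; split; apply/allP => x x_word; last exact: deco_lt_mu.
exact: leq_trans (deco_lt_mu x x_word) (mu_le_stable_bound _ _).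
Qed.

Lemma tau_tree_word : tau tree_word tree_deco = G.
Proof.
have edge_eq (x y : 'I_n.+1) :
    ((x != 0 :> nat) && (parent tree_word tree_deco x == y)) =
    (x != ord0) && (tree_parent G_itree x == y).
  rewrite -[(x != 0 :> nat)]/(x != ord0); case: (eqVneq x ord0) => [//|x_neq0] /=.
  rewrite parent_tree_deco ?(ord_mem_perm_word tree_word_perm) //.
  by rewrite /tree_parent_nat inord_val val_eqE.
apply/setP => -[u v]; rewrite inE /= !edge_eq; apply/idP/idP.
  by case/orP=> /andP[? /eqP ?]; apply/(tree_edgeP G_itree); [left|right].
by case/(tree_edgeP G_itree) => -[-> <-]; rewrite eqxx ?orbT.
Qed.

End TreeWord.

Theorem mainTheorem13 (n : nat) (hn : 1 <= n) :
  (forall (s : seq nat) (a : n.-tuple nat), canonical_decperm s a ->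
     intransitive_tree (tau s a) /\
     (forall (v : 'I_n.+1) (k : nat), is_depth (tau s a) v k <-> (v : nat) \in RunBlock s k))
  /\
  (forall (s1 s2 : seq nat) (a1 a2 : n.-tuple nat),
     canonical_decperm s1 a1 -> canonical_decperm s2 a2 ->
     tau s1 a1 = tau s2 a2 -> s1 = s2 /\ a1 = a2)
  /\
  (forall G : graph n, intransitive_tree G ->
     exists (s : seq nat) (a : n.-tuple nat), canonical_decperm s a /\ tau s a = G).
Proof.
split; [|split].
- move=> s a can; split; [exact: tau_intransitive_tree | exact: tau_depthE].
- move=> s1 s2 a1 a2 can1 can2 tau_eq.
  have eq_s := tau_inj_word can1 can2 tau_eq; subst s2.
  by split; last exact: tau_inj_deco can1 can2 tau_eq.
- move=> G G_itree; exists (tree_word G_itree), (tree_deco G_itree).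
  by split; [exact: tree_deco_canonical | exact: tau_tree_word].
Qed.
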